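(* Let $q$ be a prime power, $m\ge2$, $1\le k<n$, and let $X\in \mathbb{F}_{q^m}^{k\times(n-k)}$ be chosen uniformly at random. Then $$\Pr\big(\mathrm{rs} [\,I_k \mid X\,] \text{ is a generalized Gabidulin code}\big) \leq \phi(m)\,( 2q^{1-m})^{\lfloor\frac{k}{2}\rfloor \lfloor\frac{n-k}{2}\rfloor},$$ where $\phi$ is Euler's totient function.
   Context: $\mathrm{rs}$ denotes $\mathbb{F}_{q^m}$-row space. For $s$ coprime to $m$ and $g_1,\dots,g_n\in\mathbb{F}_{q^m}$ linearly independent over $\mathbb{F}_q$, the generalized Gabidulin code of dimension $k$ with parameter $s$ is the row space of the $k\times n$ matrix with $(i,j)$ entry $g_j^{q^{s(i-1)}}$; a generalized Gabidulin code is such a code for some such $s$ and $g_1,\dots,g_n$. *)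

From mathcomp Require Import all_boot all_order all_algebra.
From mathcomp Require Import boolp.
Set Implicit Arguments. Unset Strict Implicit. Unset Printing Implicit Defensive.
Import GRing.Theory.
Local Open Scope ring_scope.

Definition prime_power (q : nat) : Prop :=
  exists p e : nat, [/\ prime p, (0 < e)%N & q = (p ^ e)%N].

(* The prime subfield F_q of L (when #|L| = q^m): elements fixed by x |-> x^q. *)
Definition in_Fq (L : finFieldType) (q : nat) (x : L) : Prop := x ^+ q = x.

Definition Fq_lin_indep (L : finFieldType) (q n : nat) (g : 'rV[L]_n) : Prop :=
  forall c : 'I_n -> L, (forall j, in_Fq q (c j)) ->
    \sum_(j < n) c j * g 0 j = 0 -> forall j, c j = 0.

(* generator matrix of the generalized Gabidulin code: entry (i,j) = g_j^(q^(s i))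
   (rows indexed from 0, so i here is i-1 of the paper) *)
Definition gabidulin_mx (L : finFieldType) (q s k n : nat) (g : 'rV[L]_n)
  : 'M[L]_(k, n) := \matrix_(i < k, j < n) g 0 j ^+ (q ^ (s * i)).

Definition is_gen_gabidulin (L : finFieldType) (q m k n : nat) (A : 'M[L]_(k, n))
  : Prop :=
  exists (s : nat) (g : 'rV[L]_n),
    [/\ coprime s m, Fq_lin_indep q g & (A == gabidulin_mx q s k g)%MS].

Definition prob_gabidulin (L : finFieldType) (q m k r : nat) : rat :=
  (#|[set X : 'M[L]_(k, r) |
       `[< is_gen_gabidulin q m (row_mx (1%:M : 'M[L]_k) X) >] ]|%:R
   / #|{: 'M[L]_(k, r)}|%:R).

From mathcomp Require Import all_boot all_order all_algebra.
From mathcomp Require Import boolp finfield.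
From mathcomp Require Import zify.
Import GRing.Theory Num.Theory.
Local Open Scope ring_scope.
Set Implicit Arguments. Unset Strict Implicit.

(* A generalized Gabidulin code of dimension k and length 1 + n is determined
   by s mod m (coprime to m) and by g normalised to g_0 = 1: replacing s by
   s mod m does not change the Frobenius powers, and scaling g by a nonzero
   lambda multiplies the generator matrix by an invertible diagonal matrix.
   If rs [I_k | X] is such a code, X is read off the generator matrix, so at
   most phi(m) q^(m (k - 1 + r)) of the q^(m k r) matrices X are good. Since
   floor(k/2) floor(r/2) <= (k - 1)(r - 1), this already gives the bound
   without the factor 2^(floor(k/2) floor(r/2)). *)

Lemma card_coprime_ord m : #|[set t : 'I_m | coprime t m]| = totient m.
Proof.
rewrite totient_count_coprime big_mkord -sum1_card big_mkcond /=.
by apply: eq_bigr => i _; rewrite inE coprime_sym; case: coprime.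
Qed.

Section Frobenius.

Variables (L : finFieldType) (q m : nat).
Hypothesis hL : #|L| = (q ^ m)%N.

Lemma expr_expn_modn (x : L) a : x ^+ (q ^ a) = x ^+ (q ^ (a %% m)).
Proof.
rewrite {1}(div.divn_eq a m) expnD exprM.
suff -> : x ^+ (q ^ (a %/ m * m)%N) = x by [].
elim: (a %/ m)%N => [|d IH]; first by rewrite mul0n expn0 expr1.
by rewrite mulSn expnD exprM -hL expf_card.
Qed.

Lemma gabidulin_mx_modn s k n (g : 'rV[L]_n) :
  gabidulin_mx q (s %% m) k g = gabidulin_mx q s k g.
Proof.
apply/matrixP => i j; rewrite !mxE [RHS]expr_expn_modn [LHS]expr_expn_modn.
by rewrite modnMml.
Qed.

End Frobenius.

Lemma gabidulin_mx_scale (L : finFieldType) q s k n (lam : L) (g : 'rV_n) :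
  lam != 0 -> (gabidulin_mx q s k (lam *: g) :=: gabidulin_mx q s k g)%MS.
Proof.
move=> lam0; pose d := \row_(i < k) lam ^+ (q ^ (s * i)).
have -> : gabidulin_mx q s k (lam *: g) = diag_mx d *m gabidulin_mx q s k g.
  by apply/matrixP => i j; rewrite mul_diag_mx !mxE exprMn.
apply: eqmxMfull; rewrite row_full_unit unitmxE det_diag unitfE.
by apply/prodf_neq0 => i _; rewrite mxE expf_neq0.
Qed.

Lemma Fq_lin_indep_neq0 (L : finFieldType) q n (g : 'rV[L]_n) j :
  (0 < q)%N -> Fq_lin_indep q g -> g 0 j != 0.
Proof.
move=> q_gt0 indep_g; apply/eqP => gj0.
pose c j' : L := (j' == j)%:R.
have c_Fq j' : in_Fq q (c j').
  rewrite /in_Fq /c; case: (j' == j); first exact: expr1n.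
  by rewrite expr0n eqn0Ngt q_gt0.
have sum0 : \sum_(j' < n) c j' * g 0 j' = 0.
  by rewrite big1 // => j' _; rewrite /c; case: eqP => [->|_]; rewrite ?gj0 ?mulr0 ?mul0r.
by have := indep_g c c_Fq sum0 j; rewrite /c eqxx => /eqP; rewrite oner_eq0.
Qed.

Lemma gen_gabidulin_normal (L : finFieldType) q m k n (A : 'M[L]_(k, 1 + n)) :
  #|L| = (q ^ m)%N -> (0 < q)%N -> (0 < m)%N -> is_gen_gabidulin q m A ->
  exists2 p : 'I_m * 'rV_n,
    coprime p.1 m & (A == gabidulin_mx q p.1 k (row_mx (const_mx 1) p.2))%MS.
Proof.
move=> hL q_gt0 m_gt0 [s [g [cop_s indep_g /eqmxP eqA]]].
have g00 : g 0 0 != 0 := Fq_lin_indep_neq0 0 q_gt0 indep_g.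
set g' := (g 0 0)^-1 *: g.
have g'E : row_mx (const_mx 1) (rsubmx (g' : 'rV_(1 + n))) = g'.
  rewrite -[RHS](hsubmxK (g' : 'rV_(1 + n))); congr row_mx.
  apply/rowP => i; rewrite ord1 !mxE.
  by rewrite (_ : lshift n 0 = 0) ?mulVf //; apply/val_inj.
exists (Ordinal (ltn_pmod s m_gt0), rsubmx (g' : 'rV_(1 + n))).
  by rewrite /= coprime_modl.
apply/eqmxP; apply: eqmx_trans eqA _; rewrite g'E /= gabidulin_mx_modn //.
by apply: eqmx_sym; apply: gabidulin_mx_scale; rewrite invr_eq0.
Qed.

Definition systematic_part (F : fieldType) k r (A : 'M[F]_(k, k + r))
  : 'M_(k, r) := invmx (lsubmx A) *m rsubmx A.

Lemma systematic_part_eqmx (F : fieldType) k r (A : 'M[F]_(k, k + r)) X :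
  (row_mx 1%:M X == A)%MS -> systematic_part A = X.
Proof.
case/andP => /submxP [C AE] /submxP [B XE].
have {XE}AE' : A = row_mx B (B *m X) by rewrite XE mul_mx_row mulmx1.
move: AE; rewrite AE' mul_mx_row => /eq_row_mx [/esym CB _].
have [_ B_unit] := mulmx1_unit CB.
by rewrite /systematic_part row_mxKl row_mxKr mulKmx.
Qed.

Lemma card_gen_gabidulin_le (L : finFieldType) q m k r :
  #|L| = (q ^ m)%N -> (0 < q)%N -> (0 < m)%N ->
  (#|[set X : 'M[L]_(k.+1, r) | `[< is_gen_gabidulin q m (row_mx 1%:M X) >] ]|
    <= totient m * (q ^ m) ^ (k + r))%N.
Proof.
move=> hL q_gt0 m_gt0.
pose P := [set p : 'I_m * 'rV[L]_(k + r) | coprime p.1 m].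
pose code (p : 'I_m * 'rV[L]_(k + r)) : 'M_(k.+1, k.+1 + r) :=
  gabidulin_mx q p.1 k.+1 (row_mx (const_mx 1 : 'rV_1) p.2).
have sub : [set X | `[< is_gen_gabidulin q m (row_mx 1%:M X) >] ]
             \subset [set systematic_part (code p) | p in P].
  apply/subsetP => X; rewrite inE => /asboolP.
  case/(gen_gabidulin_normal hL q_gt0 m_gt0) => p cop_p eqX.
  by apply/imsetP; exists p; rewrite ?inE // (systematic_part_eqmx eqX).
apply: leq_trans (subset_leq_card sub) (leq_trans (leq_imset_card _ _) _).
have -> : P = setX [set t : 'I_m | coprime t m] setT.
  by apply/setP => -[t h]; rewrite !inE andbT.
by rewrite cardsX card_coprime_ord cardsT card_mx hL mul1n.
Qed.

Lemma gabidulin_exponent_le m k r : (0 < r)%N ->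
  (m * (k + r) + (m - 1) * (k.+1./2 * r./2) <= m * (k.+1 * r))%N.
Proof.
move=> r_gt0.
have e_le : (k.+1./2 * r./2 <= k * r.-1)%N by apply: leq_mul; lia.
have := leq_mul (leq_subr 1 m) e_le.
have -> : (m * (k.+1 * r) = m * (k + r) + m * (k * r.-1))%N.
  by rewrite -mulnDr -{1 3}(prednK r_gt0); congr (m * _)%N; lia.
by rewrite leq_add2l.
Qed.

Theorem theorem4p9 (q m k r : nat) (L : finFieldType)
  (hq : prime_power q) (hL : #|L| = (q ^ m)%N) (hm : (2 <= m)%N)
  (hk : (1 <= k)%N) (hr : (1 <= r)%N) :
  prob_gabidulin L q m k r <=
    (totient m)%:R * (2%:R / (q%:R ^+ (m - 1)%N)) ^+ (k./2 * r./2)%N.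
Proof.
have q_gt0 : (0 < q)%N by case: hq => p [e [p_pr _ ->]]; rewrite expn_gt0 prime_gt0.
have m_gt0 : (0 < m)%N by apply: leq_trans hm.
case: k hk => // k _; rewrite /prob_gabidulin.
set S := [set X | _]; set e := (k.+1./2 * r./2)%N.
have count_ineq :
    (#|S| * (q ^ (m - 1)) ^ e <= (totient m * 2 ^ e) * (q ^ m) ^ (k.+1 * r))%N.
  have cardS : (#|S| <= totient m * (q ^ m) ^ (k + r))%N.
    exact: card_gen_gabidulin_le.
  apply: leq_trans (leq_mul cardS (leqnn _)) _.
  apply: (@leq_trans (totient m * (q ^ m) ^ (k.+1 * r))).
    rewrite -mulnA leq_mul // -!expnM -expnD leq_pexp2l //.
    exact: gabidulin_exponent_le.
  by rewrite mulnAC leq_pmulr // expn_gt0.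
rewrite card_mx hL expr_div_n -natrX -natrX mulrA -natrM.
rewrite ler_pdivrMr ?ltr0n ?expn_gt0 ?q_gt0 //.
rewrite mulrAC ler_pdivlMr ?exprn_gt0 ?ltr0n ?expn_gt0 ?q_gt0 //.
by rewrite -natrX -!natrM ler_nat.
Qed.
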